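(* Let $n$ be an even positive integer, $p$ a prime dividing $n$, and $p^a$ the largest power of $p$ dividing $n$. Suppose there is a prime $q$ with $n/3<q<n/2$ and $n-2q<p^a$. Then: (a) if $p=2$, for every $1\le k\le n-1$ the coefficient $\binom{n}{k}$ is divisible by $2$ or $q$; (b) if $p\ne2$, then $\binom{n}{k}$ is divisible by $p$ or $q$ for all $1\le k\le n-1$ if and only if $\binom{n}{n/2}$ is divisible by $p$. *)

From mathcomp Require Import all_boot.

From mathcomp Require Import all_boot.
From mathcomp Require Import zify.

(* Since [2q < n < 3q], Legendre's formula shows that [q] divides [C(n, k)]
   unless [k <= n - 2q], [n - k <= n - 2q], or both [k] and [n - k] are at
   least [q].  If [p] does not divide [C(n, k)], then [k C(n, k) = n C(n-1, k-1)]
   forces [p^a] to divide [k], and likewise [n - k].  As [n - 2q < p^a], the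
   first two cases are impossible, and in the third [k] and [n - k] are
   multiples of [p^a] at distance at most [n - 2q], hence equal.  So only the
   central coefficient can escape both primes: it is always even, and it is
   never divisible by [q]. *)

Lemma divn_between c d m : 0 < d -> c * d <= m < c.+1 * d -> m %/ d = c.
Proof.
move=> d_gt0 /andP[le_cd_m lt_m_c1d]; apply/eqP; rewrite eqn_leq.
by rewrite -ltnS ltn_divLR // lt_m_c1d leq_divRL.
Qed.

Lemma dvdn_dist_eq [d m n] : d %| m -> d %| n -> m - n < d -> n - m < d -> m = n.
Proof.
wlog le_nm : m n / n <= m => [hwlog dm dn lt1 lt2|dm dn lt_d _].
  by case: (leqP n m) => [|/ltnW] le; [|symmetry]; apply: hwlog.
have := dvdn_sub dm dn; rewrite /dvdn modn_small // => /eqP; lia.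
Qed.

Lemma prime_dvd_bin_pfactor p a n k :
  prime p -> 0 < k -> p ^ a %| n -> ~~ (p ^ a %| k) -> p %| 'C(n, k).
Proof.
move=> pr_p; case: k => [//|k] _ dvd_n; apply: contraR => ndvd_C.
have co_C : coprime (p ^ a) 'C(n, k.+1) by rewrite coprimeXl // prime_coprime.
by rewrite -(Gauss_dvdl _ co_C) -mul_bin_diag dvdn_mulr.
Qed.

Lemma two_dvd_bin_double m : 0 < m -> 2 %| 'C(m.*2, m).
Proof.
case: m => [//|m] _.
have : m.+1 * 'C(m.+1.*2, m.+1) = m.+1 * (2 * 'C(m.*2.+1, m)).
  by rewrite -mul_bin_diag mulnA muln2 doubleS.
by move/eqP; rewrite eqn_mul2l /= => /eqP ->; apply: dvdn_mulr.
Qed.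

Lemma logn_fact_small q m : prime q -> m < q * q -> logn q m`! = m %/ q.
Proof.
move=> pr_q lt_m_qq; rewrite logn_fact //.
case: m lt_m_qq => [|m] lt_m_qq; first by rewrite big_geq ?div0n.
rewrite big_ltn // expn1 big1_seq ?addn0 // => i /andP[_].
rewrite mem_index_iota => /andP[le_2_i _]; apply: divn_small.
by rewrite (leq_trans lt_m_qq) // -[q * q]/(q ^ 2) leq_exp2l // prime_gt1.
Qed.

Lemma prime_dvd_bin_small q n k : prime q -> n < q * q -> k <= n ->
  (q %| 'C(n, k)) = (k %/ q + (n - k) %/ q < n %/ q).
Proof.
move=> pr_q lt_n_qq le_kn.
have lt_k_qq := leq_ltn_trans le_kn lt_n_qq.
have lt_nk_qq := leq_ltn_trans (leq_subr k n) lt_n_qq.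
have := bin_fact le_kn; move/(congr1 (logn q)).
rewrite !lognM ?bin_gt0 ?muln_gt0 ?fact_gt0 // !logn_fact_small //.
have -> : (q %| 'C(n, k)) = (0 < logn q 'C(n, k)).
  by rewrite logn_gt0 mem_primes pr_q bin_gt0 le_kn.
move=> <-; lia.
Qed.

Section PrimeBetweenThirdAndHalf.

Context {n q : nat}.
Hypotheses (pr_q : prime q) (even_n : ~~ odd n).
Hypotheses (lt_n_3q : n < 3 * q) (lt_2q_n : 2 * q < n).

Let q_gt0 : 0 < q. Proof. exact: prime_gt0. Qed.
Let lt_n_qq : n < q * q.
Proof. by rewrite (leq_trans lt_n_3q) // leq_mul2r; lia. Qed.
Let n_div_q : n %/ q = 2.
Proof. by apply: divn_between => //; lia. Qed.

Lemma prime_ndvd_bin_cases k : k <= n -> ~~ (q %| 'C(n, k)) ->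
  [\/ k <= n - 2 * q, n - k <= n - 2 * q | q <= k <= n - q].
Proof.
move=> le_kn; rewrite prime_dvd_bin_small // n_div_q -leqNgt => carry.
have low_part x : x <= n -> x < q -> 2 <= x %/ q + (n - x) %/ q ->
    x <= n - 2 * q.
  by move=> le_xn lt_xq; rewrite divn_small // leq_divRL //; lia.
case: (ltnP k q) => [lt_kq|le_qk]; first by constructor 1; apply: low_part.
case: (ltnP (n - k) q) => [lt_nk_q|le_q_nk]; last by constructor 3; lia.
constructor 2; apply: low_part; rewrite ?subKn ?leq_subr //; lia.
Qed.

Lemma prime_ndvd_bin_half : ~~ (q %| 'C(n, n %/ 2)).
Proof.
rewrite prime_dvd_bin_small ?leq_div //.
have -> : n - n %/ 2 = n %/ 2 by lia.
by rewrite n_div_q (@divn_between 1) //; lia.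
Qed.

End PrimeBetweenThirdAndHalf.

Lemma bin_ndvd_pq_half {n p q k} :
    prime p -> prime q -> ~~ odd n -> n < 3 * q -> 2 * q < n ->
    n - 2 * q < p ^ logn p n -> 0 < k < n ->
  ~~ (p %| 'C(n, k)) -> ~~ (q %| 'C(n, k)) -> k.*2 = n.
Proof.
move=> pr_p pr_q even_n lt_n_3q lt_2q_n lt_rem /andP[k_gt0 lt_kn] ndvd_p ndvd_q.
have pfactor_dvd x : 0 < x -> ~~ (p %| 'C(n, x)) -> p ^ logn p n %| x.
  by move=> x_gt0; apply: contraR; apply/prime_dvd_bin_pfactor/pfactor_dvdnn.
have dvd_k := pfactor_dvd k k_gt0 ndvd_p.
have dvd_nk : p ^ logn p n %| n - k.
  by apply: pfactor_dvd; rewrite ?subn_gt0 ?bin_sub // ltnW.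
have big_part x : 0 < x -> p ^ logn p n %| x -> n - 2 * q < x.
  by move=> x_gt0 /(dvdn_leq x_gt0); apply: leq_trans.
have [le_k|le_nk|mid] := prime_ndvd_bin_cases pr_q even_n lt_n_3q lt_2q_n
  k (ltnW lt_kn) ndvd_q.
- by rewrite leqNgt big_part in le_k.
- by rewrite leqNgt big_part ?subn_gt0 in le_nk.
- have [le_k_nk le_nk_k] : k - (n - k) <= n - 2 * q /\ n - k - k <= n - 2 * q.
    by move: mid; clear; lia.
  have := dvdn_dist_eq dvd_k dvd_nk (leq_ltn_trans le_k_nk lt_rem)
    (leq_ltn_trans le_nk_k lt_rem).
  by move: lt_kn; clear; lia.
Qed.

Theorem mainTheorem10 (n p q : nat) :
  0 < n -> ~~ odd n -> prime p -> p %| n ->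
  prime q -> n < 3 * q -> 2 * q < n -> n - 2 * q < p ^ logn p n ->
  (p = 2 -> forall k, 1 <= k <= n - 1 -> (2 %| 'C(n, k)) || (q %| 'C(n, k)))
  /\
  (p <> 2 ->
     ((forall k, 1 <= k <= n - 1 -> (p %| 'C(n, k)) || (q %| 'C(n, k)))
      <-> p %| 'C(n, n %/ 2))).
Proof.
move=> _ even_n pr_p _ pr_q lt_n_3q lt_2q_n lt_rem.
have n_half : (n %/ 2).*2 = n.
  by rewrite divn2 -[RHS]odd_double_half (negbTE even_n).
have pq_or_half k : 1 <= k <= n - 1 ->
    [|| p %| 'C(n, k), q %| 'C(n, k) | k == n %/ 2].
  move=> k_range; case: (boolP (p %| _)) => //= ndvd_p.
  case: (boolP (q %| _)) => //= ndvd_q.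
  have k_range' : 0 < k < n by lia.
  rewrite -(bin_ndvd_pq_half pr_p pr_q even_n lt_n_3q lt_2q_n lt_rem k_range') //.
  by rewrite divn2 doubleK.
split=> [p2 k /pq_or_half|p_neq2].
  subst p; case/or3P=> [->|->|/eqP->]; rewrite ?orbT //.
  by rewrite -{1}n_half two_dvd_bin_double // divn_gt0 //; lia.
split=> [all_pq|dvd_half k /pq_or_half /or3P[->|->|/eqP->]];
  rewrite ?dvd_half ?orbT //.
have := all_pq (n %/ 2).
rewrite (negbTE (prime_ndvd_bin_half pr_q even_n lt_n_3q lt_2q_n)) orbF.
by apply; lia.
Qed.
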